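(* For all $n_1,n_2\in\mathbb N$, with $m=\max(n_1,n_2)$, there are an $\mathrm{NRC}$ expression $\widehat{\mathsf{Pair}}(x,y)$ with $x:\mathfrak U_{n_1}$, $y:\mathfrak U_{n_2}$ and output type $\mathfrak U_{m+2}$, and $\mathrm{NRC}[\mathsf{get}]$ expressions $\hat\pi_i(x)$ from $\mathfrak U_{m+2}$ to $\mathfrak U_{n_i}$ ($i=1,2$), such that $\hat\pi_1(\widehat{\mathsf{Pair}}(a_1,a_2))=a_1$ and $\hat\pi_2(\widehat{\mathsf{Pair}}(a_1,a_2))=a_2$ for all $a_1,a_2$. Furthermore there is a $\Delta_0$ formula $\mathrm{Im}_{\widehat{\mathsf{Pair}}}(x)$ such that $\mathrm{Im}_{\widehat{\mathsf{Pair}}}(a)$ holds iff $a=\widehat{\mathsf{Pair}}(a_1,a_2)$ for some $a_1,a_2$, and in that case $\widehat{\mathsf{Pair}}(\hat\pi_1(a),\hat\pi_2(a))=a$.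
   Context: Monadic types: $\mathfrak U_0:=\mathfrak U$ (a set of atoms), $\mathfrak U_{n+1}:=\mathsf{Set}(\mathfrak U_n)$ (all subsets). $\Delta_0$ formulas: built from $t=_{\mathfrak U}u$, $t\neq_{\mathfrak U}u$, $\top,\bot$ with $\wedge,\vee$ and bounded quantifiers $\forall x\in t$, $\exists x\in t$. $\mathrm{NRC}[\mathsf{get}]$: typed expressions built from variables, $\langle\rangle$, pairing, projections, $\emptyset$, singleton $\{E\}$, $\cup$, $\setminus$, big union $\bigcup\{E_1\mid x\in E_2\}$, and $\mathsf{get}_T(E)$ (the unique element of a singleton $E$, a fixed default element otherwise); $\mathrm{NRC}$ is the fragment without $\mathsf{get}$. *)

From Stdlib Require Import List ClassicalEpsilon.
Import ListNotations.
Set Implicit Arguments.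

Inductive ty : Type :=
| TU : ty
| TUnit : ty
| TProd : ty -> ty -> ty
| TSet : ty -> ty.

(* Semantics over a type of atoms U: Set(T) = all subsets (predicates);
   equality of sets is extensional thanks to propext/funext. *)
Fixpoint sem (U : Type) (t : ty) : Type :=
  match t with
  | TU => U
  | TUnit => unit
  | TProd a b => (sem U a * sem U b)%type
  | TSet a => sem U a -> Prop
  end.

Fixpoint Un (n : nat) : ty :=
  match n with
  | 0 => TU
  | S k => TSet (Un k)
  end.

Inductive var : list ty -> ty -> Type :=
| VZ : forall G T, var (T :: G) T
| VS : forall G T S, var G T -> var (S :: G) T.

Fixpoint env (U : Type) (G : list ty) : Type :=
  match G with
  | [] => unit
  | T :: G' => (sem U T * env U G')%type
  end.

Fixpoint lookup (U : Type) G T (v : var G T) : env U G -> sem U T :=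
  match v in var G T return env U G -> sem U T with
  | VZ _ _ => fun rho => fst rho
  | VS _ v' => fun rho => @lookup U _ _ v' (snd rho)
  end.

Inductive expr : list ty -> ty -> Type :=
| EVar : forall G T, var G T -> expr G T
| EUnit : forall G, expr G TUnit
| EPair : forall G A B, expr G A -> expr G B -> expr G (TProd A B)
| EFst : forall G A B, expr G (TProd A B) -> expr G A
| ESnd : forall G A B, expr G (TProd A B) -> expr G B
| EEmpty : forall G T, expr G (TSet T)
| ESing : forall G T, expr G T -> expr G (TSet T)
| EUnion : forall G T, expr G (TSet T) -> expr G (TSet T) -> expr G (TSet T)
| EDiff : forall G T, expr G (TSet T) -> expr G (TSet T) -> expr G (TSet T)
(* EBigUnion body e  =  \bigcup { body | x \in e },  x bound in body *)
| EBigUnion : forall G S T, expr (S :: G) (TSet T) -> expr G (TSet S) -> expr G (TSet T)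
| EGet : forall G T, expr G (TSet T) -> expr G T.

Fixpoint no_get G T (e : expr G T) : Prop :=
  match e with
  | @EVar _ _ _ => True
  | @EUnit _ => True
  | EPair a b => @no_get _ _ a /\ @no_get _ _ b
  | EFst a => @no_get _ _ a
  | ESnd a => @no_get _ _ a
  | @EEmpty _ _ => True
  | ESing a => @no_get _ _ a
  | EUnion a b => @no_get _ _ a /\ @no_get _ _ b
  | EDiff a b => @no_get _ _ a /\ @no_get _ _ b
  | EBigUnion b a => @no_get _ _ b /\ @no_get _ _ a
  | @EGet _ _ _ => False
  end.

(* get: the unique element of a singleton, a fixed default otherwise. *)
Definition get_sem (U : Type) (T : ty) (dflt : sem U T) (A : sem U (TSet T)) : sem U T :=
  match excluded_middle_informative (exists x : sem U T, A = (fun y => y = x)) with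
  | left h => proj1_sig (constructive_indefinite_description _ h)
  | right _ => dflt
  end.

Fixpoint eval (U : Type) (dflt : forall T, sem U T) G T (e : expr G T)
  : env U G -> sem U T :=
  match e in expr G T return env U G -> sem U T with
  | @EVar _ _ v => fun rho => @lookup U _ _ v rho
  | @EUnit _ => fun _ => tt
  | EPair a b => fun rho => (@eval U dflt _ _ a rho, @eval U dflt _ _ b rho)
  | EFst a => fun rho => fst (@eval U dflt _ _ a rho)
  | ESnd a => fun rho => snd (@eval U dflt _ _ a rho)
  | @EEmpty _ _ => fun _ _ => False
  | ESing a => fun rho y => y = @eval U dflt _ _ a rho
  | EUnion a b => fun rho y => @eval U dflt _ _ a rho y \/ @eval U dflt _ _ b rho y
  | EDiff a b => fun rho y => @eval U dflt _ _ a rho y /\ ~ @eval U dflt _ _ b rho y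
  | EBigUnion b a => fun rho y =>
      exists x, @eval U dflt _ _ a rho x /\ @eval U dflt _ _ b (x, rho) y
  | EGet a => fun rho => get_sem (dflt _) (@eval U dflt _ _ a rho)
  end.

Inductive fml : list ty -> Type :=
| FEq : forall G, var G TU -> var G TU -> fml G
| FNeq : forall G, var G TU -> var G TU -> fml G
| FTrue : forall G, fml G
| FFalse : forall G, fml G
| FAnd : forall G, fml G -> fml G -> fml G
| FOr : forall G, fml G -> fml G -> fml G
| FAll : forall G T, var G (TSet T) -> fml (T :: G) -> fml G
| FEx : forall G T, var G (TSet T) -> fml (T :: G) -> fml G.

Fixpoint holds (U : Type) G (f : fml G) : env U G -> Prop :=
  match f in fml G return env U G -> Prop with
  | FEq u v => fun rho => @lookup U _ _ u rho = @lookup U _ _ v rho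
  | FNeq u v => fun rho => @lookup U _ _ u rho <> @lookup U _ _ v rho
  | @FTrue _ => fun _ => True
  | @FFalse _ => fun _ => False
  | FAnd a b => fun rho => @holds U _ a rho /\ @holds U _ b rho
  | FOr a b => fun rho => @holds U _ a rho \/ @holds U _ b rho
  | FAll t a => fun rho => forall x, @lookup U _ _ t rho x -> @holds U _ a (x, rho)
  | FEx t a => fun rho => exists x, @lookup U _ _ t rho x /\ @holds U _ a (x, rho)
  end.

Arguments lookup {U G T} v _.
Arguments eval {U} dflt {G T} e _.
Arguments holds {U G} f _.
Arguments no_get {G T} e.
Arguments get_sem {U T} dflt A.

(* Encode (a1, a2) by the Kuratowski pair {{x1}, {x1, x2}} of the images x_i of the a_i in U_m,
   where x_i is a_i wrapped in (m - n_i) singletons; unwrapping is done with get.  The first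
   component is the big intersection {x1}.  For the second one, the set union minus
   intersection is {x2} when x1 <> x2 and empty otherwise; in the latter case the intersection
   {x1} = {x2} is returned instead, a case distinction that NRC can express with a big union
   over that (possibly empty) difference.  The image is definable by a Delta_0 formula because
   equality at U_k is expressible by bounded quantification down to the atoms. *)
From Stdlib Require Import List ClassicalEpsilon Classical PeanoNat.
From Stdlib Require Import FunctionalExtensionality PropExtensionality.
Import ListNotations.

Notation v0 := (VZ _ _).
Notation vS v := (VS _ v).

Lemma pred_ext {A : Type} (p q : A -> Prop) : (forall x, p x <-> q x) -> p = q.
Proof.
  intro H; apply functional_extensionality; intro x.
  apply propositional_extensionality; auto.
Qed.

Definition singleton {A : Type} (x : A) : A -> Prop := fun t => t = x.
Definition doubleton {A : Type} (x y : A) : A -> Prop := fun t => t = x \/ t = y.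
Definition kpair {A : Type} (x y : A) : (A -> Prop) -> Prop :=
  doubleton (singleton x) (doubleton x y).
Definition sunion {A : Type} (F : (A -> Prop) -> Prop) : A -> Prop :=
  fun t => exists w, F w /\ w t.
Definition sinter {A : Type} (F : (A -> Prop) -> Prop) : A -> Prop :=
  fun t => sunion F t /\ forall w, F w -> w t.

Definition ssecond {A : Type} (F : (A -> Prop) -> Prop) : A -> Prop :=
  fun t => (sunion F t /\ ~ sinter F t) \/
           (sinter F t /\ ~ exists s, (sunion F s /\ ~ sinter F s) /\ sinter F t).

Lemma doubleton_diag {A : Type} (x : A) : doubleton x x = singleton x.
Proof. apply pred_ext; unfold doubleton, singleton; tauto. Qed.

Lemma sunion_kpair {A : Type} (x y : A) : sunion (kpair x y) = doubleton x y.
Proof.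
  apply pred_ext; intro t; unfold sunion, kpair, doubleton, singleton; split.
  - intros (w & [-> | ->] & Hw); auto.
  - intros [-> | ->]; [exists (singleton x) | exists (doubleton x y)];
      unfold singleton, doubleton; auto.
Qed.

Lemma sinter_kpair {A : Type} (x y : A) : sinter (kpair x y) = singleton x.
Proof.
  apply pred_ext; intro t; unfold sinter; rewrite sunion_kpair.
  unfold kpair, doubleton, singleton; split.
  - intros [_ Hall]; apply (Hall (fun t => t = x)); auto.
  - intros ->; split; auto.
    intros w [-> | ->]; auto.
Qed.

Lemma ssecond_kpair {A : Type} (x y : A) : ssecond (kpair x y) = singleton y.
Proof.
  unfold ssecond; rewrite sunion_kpair, sinter_kpair; symmetry.
  apply pred_ext; intro t; unfold doubleton, singleton.
  destruct (classic (y = x)) as [-> | Hxy]; split.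
  - intros ->; right; split; [reflexivity|].
    intros (s & ([-> | ->] & Hs) & _); auto.
  - intros [[Ht Hn] | [Ht _]]; tauto.
  - intros ->; left; auto.
  - intros [[[-> | ->] Ht] | [-> Hnone]]; try tauto.
    exfalso; apply Hnone; exists y; auto.
Qed.

Lemma get_sem_singleton (U : Type) (T : ty) (d : sem U T) (x : sem U T) :
  get_sem d (singleton x) = x.
Proof.
  unfold get_sem; destruct excluded_middle_informative as [h | h].
  - destruct constructive_indefinite_description as [y Hy]; cbn.
    assert (Hx : singleton x x) by reflexivity.
    rewrite Hy in Hx; symmetry; exact Hx.
  - exfalso; apply h; exists x; reflexivity.
Qed.

Definition doubleton_expr {G T} (e1 e2 : expr G T) : expr G (TSet T) :=
  EUnion (ESing e1) (ESing e2).

Definition kpair_expr {G T} (e1 e2 : expr G T) : expr G (TSet (TSet T)) :=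
  doubleton_expr (ESing e1) (doubleton_expr e1 e2).

Lemma no_get_kpair_expr {G T} (e1 e2 : expr G T) :
  no_get e1 -> no_get e2 -> no_get (kpair_expr e1 e2).
Proof. cbn; tauto. Qed.

Lemma eval_kpair_expr U (dflt : forall T, sem U T) G T (e1 e2 : expr G T) rho :
  eval dflt (kpair_expr e1 e2) rho = kpair (eval dflt e1 rho) (eval dflt e2 rho).
Proof. reflexivity. Qed.

Definition big_union_expr {G T} (a : var G (TSet (TSet T))) : expr G (TSet T) :=
  EBigUnion (EVar v0) (EVar a).

(* [t] lies in the intersection iff [{t} \ w] is empty for every [w] in [a]. *)
Definition big_inter_expr {G T} (a : var G (TSet (TSet T))) : expr G (TSet T) :=
  EBigUnion
    (EDiff (ESing (EVar v0))
       (EBigUnion (EDiff (ESing (EVar (vS v0))) (EVar v0)) (EVar (vS a))))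
    (big_union_expr a).

Definition second_expr {G T} (a : var G (TSet (TSet T))) : expr G (TSet T) :=
  EUnion (EDiff (big_union_expr a) (big_inter_expr a))
    (EDiff (big_inter_expr a)
       (EBigUnion (big_inter_expr (vS a)) (EDiff (big_union_expr a) (big_inter_expr a)))).

Section Components.
Variables (U : Type) (dflt : forall T, sem U T) (T : ty).

Lemma eval_big_union_expr G (a : var G (TSet (TSet T))) rho :
  eval dflt (big_union_expr a) rho = sunion (lookup a rho).
Proof. reflexivity. Qed.

Lemma eval_big_inter_expr G (a : var G (TSet (TSet T))) rho :
  eval dflt (big_inter_expr a) rho = sinter (lookup a rho).
Proof.
  apply pred_ext; intro t; unfold big_inter_expr, sinter; cbn [eval lookup fst snd].
  rewrite eval_big_union_expr; split.
  - intros (s & Hs & -> & Hn); split; auto.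
    intros w Hw; apply NNPP; intro Hwt; apply Hn; eauto.
  - intros [Ht Hall]; exists t; repeat split; auto.
    intros (w & Hw & _ & Hwt); exact (Hwt (Hall w Hw)).
Qed.

Lemma eval_second_expr G (a : var G (TSet (TSet T))) rho :
  eval dflt (second_expr a) rho = ssecond (lookup a rho).
Proof.
  unfold second_expr; cbn [eval].
  rewrite !eval_big_union_expr, !eval_big_inter_expr.
  assert (Hinner : forall s t,
            eval dflt (big_inter_expr (VS T a)) (s, rho) t <-> sinter (lookup a rho) t)
    by (intros s t; rewrite (eval_big_inter_expr _ (VS T a) (s, rho)); reflexivity).
  apply pred_ext; intro t; unfold ssecond; setoid_rewrite Hinner; reflexivity.
Qed.

Lemma eval_get_big_inter_kpair G (a : var G (TSet (TSet T))) rho x y :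
  lookup a rho = kpair x y -> eval dflt (EGet (big_inter_expr a)) rho = x.
Proof.
  intro Ha; cbn [eval].
  rewrite eval_big_inter_expr, Ha, sinter_kpair; apply get_sem_singleton.
Qed.

Lemma eval_get_second_kpair G (a : var G (TSet (TSet T))) rho x y :
  lookup a rho = kpair x y -> eval dflt (EGet (second_expr a)) rho = y.
Proof.
  intro Ha; cbn [eval].
  rewrite eval_second_expr, Ha, ssecond_kpair; apply get_sem_singleton.
Qed.

End Components.

Fixpoint eq_fml (k : nat) : forall G, var G (Un k) -> var G (Un k) -> fml G :=
  match k return forall G, var G (Un k) -> var G (Un k) -> fml G with
  | 0 => fun G u v => FEq u v
  | S k' => fun G u v =>
      FAnd (@FAll G (Un k') u (FEx (vS v) (eq_fml k' _ (vS v0) v0)))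
           (@FAll G (Un k') v (FEx (vS u) (eq_fml k' _ v0 (vS v0))))
  end.

Lemma holds_eq_fml k U G (u v : var G (Un k)) (rho : env U G) :
  holds (eq_fml k G u v) rho <-> lookup u rho = lookup v rho.
Proof.
  revert G u v rho; induction k as [|k IHk]; intros G u v rho; cbn; [tauto|].
  setoid_rewrite IHk; cbn; split.
  - intros [H1 H2]; apply pred_ext; intro x; split; intro Hx.
    + destruct (H1 x Hx) as (y & Hy & ->); auto.
    + destruct (H2 x Hx) as (y & Hy & <-); auto.
  - intros E; rewrite E; split; eauto.
Qed.

Definition is_doubleton_fml {k G} (w : var G (Un (S k))) (z1 z2 : var G (Un k)) : fml G :=
  FAnd (@FAll G (Un k) w (FOr (eq_fml k _ v0 (vS z1)) (eq_fml k _ v0 (vS z2))))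
       (FAnd (@FEx G (Un k) w (eq_fml k _ v0 (vS z1)))
             (@FEx G (Un k) w (eq_fml k _ v0 (vS z2)))).

Definition is_singleton_fml {k G} (w : var G (Un (S k))) (z : var G (Un k)) : fml G :=
  is_doubleton_fml w z z.

Lemma holds_is_doubleton_fml k U G (w : var G (Un (S k))) z1 z2 (rho : env U G) :
  holds (is_doubleton_fml w z1 z2) rho <->
  lookup w rho = doubleton (lookup z1 rho) (lookup z2 rho).
Proof.
  unfold is_doubleton_fml, doubleton; cbn [holds]; setoid_rewrite holds_eq_fml; cbn; split.
  - intros (H1 & (t1 & Ht1 & E1) & (t2 & Ht2 & E2)); subst t1 t2.
    apply pred_ext; intro t; split; auto.
    intros [-> | ->]; auto.
  - intros ->; repeat split; eauto.
Qed.

Lemma holds_is_singleton_fml k U G (w : var G (Un (S k))) z (rho : env U G) :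
  holds (is_singleton_fml w z) rho <-> lookup w rho = singleton (lookup z rho).
Proof. rewrite <- doubleton_diag; apply holds_is_doubleton_fml. Qed.

(* [P] is evaluated with [z2; z1; v; u] pushed, where [a = {u, v}], [u = {z1}], [v = {z1, z2}]. *)
Definition kpair_with_fml {m G} (a : var G (Un (S (S m))))
    (P : fml (Un m :: Un m :: Un (S m) :: Un (S m) :: G)) : fml G :=
  @FEx G (Un (S m)) a (@FEx _ (Un (S m)) (vS a)
    (@FEx _ (Un m) (vS v0) (@FEx _ (Un m) (vS v0)
      (FAnd (is_doubleton_fml (vS (vS (vS (vS a)))) (vS (vS (vS v0))) (vS (vS v0)))
      (FAnd (is_singleton_fml (vS (vS (vS v0))) (vS v0))
      (FAnd (is_doubleton_fml (vS (vS v0)) (vS v0) v0) P)))))).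

Lemma holds_kpair_with_fml m U G (a : var G (Un (S (S m)))) P (rho : env U G) :
  holds (kpair_with_fml a P) rho <->
  exists x y, lookup a rho = kpair x y /\
              holds P (y, (x, (doubleton x y, (singleton x, rho)))).
Proof.
  unfold kpair_with_fml; cbn [holds].
  setoid_rewrite holds_is_singleton_fml; setoid_rewrite holds_is_doubleton_fml.
  cbn [lookup fst snd]; split.
  - intros (u & _ & v & _ & x & _ & y & _ & Ha & -> & -> & HP); eauto.
  - intros (x & y & Ha & HP).
    assert (Hmem : forall w, lookup a rho w <-> kpair x y w) by (intro w; rewrite Ha; tauto).
    exists (singleton x); split; [apply Hmem; left; reflexivity|].
    exists (doubleton x y); split; [apply Hmem; right; reflexivity|].
    exists x; split; [reflexivity|].
    exists y; split; [right; reflexivity|].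
    auto.
Qed.

Record lifting (n m : nat) : Type := {
  lift : forall G, expr G (Un n) -> expr G (Un m);
  unlift : forall G, expr G (Un m) -> expr G (Un n);
  lift_image : forall G, var G (Un m) -> fml G;
  lift_sem : forall U, sem U (Un n) -> sem U (Un m);
  no_get_lift : forall G (e : expr G (Un n)), no_get e -> no_get (lift G e);
  eval_lift : forall U (dflt : forall T, sem U T) G (e : expr G (Un n)) rho,
    eval dflt (lift G e) rho = lift_sem U (eval dflt e rho);
  eval_unlift : forall U (dflt : forall T, sem U T) G (e : expr G (Un m)) rho x,
    eval dflt e rho = lift_sem U x -> eval dflt (unlift G e) rho = x;
  holds_lift_image : forall U G (v : var G (Un m)) (rho : env U G),
    holds (lift_image G v) rho <-> exists x, lookup v rho = lift_sem U x
}.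

Arguments lift {n m} l {G} e.
Arguments unlift {n m} l {G} e.
Arguments lift_image {n m} l {G} v.
Arguments lift_sem {n m} l {U} x.
Arguments no_get_lift {n m} l {G} e.
Arguments eval_lift {n m} l {U} dflt {G} e rho.
Arguments eval_unlift {n m} l {U} dflt {G} e rho x.
Arguments holds_lift_image {n m} l {U G} v rho.

Definition lifting_refl (n : nat) : lifting n n.
Proof.
  refine (@Build_lifting n n (fun G e => e) (fun G e => e) (fun G v => FTrue G)
            (fun U x => x) _ _ _ _); auto.
  intros; cbn; split; eauto.
Defined.

Definition lifting_succ (n m : nat) (l : lifting n m) : lifting n (S m).
Proof.
  refine (@Build_lifting n (S m)
            (fun G e => ESing (lift l e))
            (fun G e => unlift l (EGet e))
            (fun G v => @FEx G (Un m) v (FAnd (lift_image l v0) (is_singleton_fml (vS v) v0)))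
            (fun U x => singleton (lift_sem l x)) _ _ _ _).
  - intros G e He; apply (no_get_lift l); exact He.
  - intros U dflt G e rho; cbn; rewrite eval_lift; reflexivity.
  - intros U dflt G e rho x He; apply eval_unlift; cbn [eval].
    change (get_sem (dflt (Un m)) (eval dflt e rho) = lift_sem l x); rewrite He.
    apply get_sem_singleton.
  - intros U G v rho; cbn [holds]; setoid_rewrite holds_is_singleton_fml.
    setoid_rewrite (holds_lift_image l); cbn; split.
    + intros (z & _ & (x & ->) & Hv); eauto.
    + intros (x & Hv); exists (lift_sem l x); rewrite Hv; repeat split; eauto.
Defined.

Lemma lifting_of_le {n m : nat} : n <= m -> inhabited (lifting n m).
Proof.
  induction 1 as [|m _ [l]]; constructor; [apply lifting_refl | apply lifting_succ, l].
Qed.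

Section Encoding.
Variables (n1 n2 m : nat) (l1 : lifting n1 m) (l2 : lifting n2 m).

Definition pair_expr : expr [Un n1; Un n2] (Un (S (S m))) :=
  kpair_expr (lift l1 (EVar v0)) (lift l2 (EVar (vS v0))).

Definition proj1_expr : expr [Un (S (S m))] (Un n1) :=
  unlift l1 (EGet (big_inter_expr v0)).

Definition proj2_expr : expr [Un (S (S m))] (Un n2) :=
  unlift l2 (EGet (second_expr v0)).

Definition pair_image_fml : fml [Un (S (S m))] :=
  kpair_with_fml v0 (FAnd (lift_image l1 (vS v0)) (lift_image l2 v0)).

Lemma no_get_pair_expr : no_get pair_expr.
Proof. apply no_get_kpair_expr; apply no_get_lift; exact I. Qed.

Section Semantics.
Variables (U : Type) (dflt : forall T, sem U T).

Lemma eval_pair_expr a1 a2 :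
  eval dflt pair_expr (a1, (a2, tt)) = kpair (lift_sem l1 a1) (lift_sem l2 a2).
Proof.
  etransitivity; [apply eval_kpair_expr|].
  rewrite !eval_lift; reflexivity.
Qed.

Lemma eval_proj_exprs a a1 a2 : a = kpair (lift_sem l1 a1) (lift_sem l2 a2) ->
  eval dflt proj1_expr (a, tt) = a1 /\ eval dflt proj2_expr (a, tt) = a2.
Proof.
  intro Ha; split; apply eval_unlift;
    [eapply eval_get_big_inter_kpair | eapply eval_get_second_kpair]; exact Ha.
Qed.

Lemma eval_proj_pair_expr a1 a2 :
  eval dflt proj1_expr (eval dflt pair_expr (a1, (a2, tt)), tt) = a1 /\
  eval dflt proj2_expr (eval dflt pair_expr (a1, (a2, tt)), tt) = a2.
Proof. apply eval_proj_exprs, eval_pair_expr. Qed.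

Lemma holds_pair_image_fml (a : sem U (Un (S (S m)))) :
  holds pair_image_fml (a, tt) <-> exists a1 a2, a = kpair (lift_sem l1 a1) (lift_sem l2 a2).
Proof.
  unfold pair_image_fml; rewrite holds_kpair_with_fml; cbn [holds].
  setoid_rewrite (holds_lift_image l1); setoid_rewrite (holds_lift_image l2).
  cbn [lookup fst snd]; split.
  - intros (x & y & -> & (a1 & ->) & (a2 & ->)); eauto.
  - intros (a1 & a2 & ->); exists (lift_sem l1 a1), (lift_sem l2 a2); eauto.
Qed.

Lemma pair_image_fml_correct (a : sem U (Un (S (S m)))) :
  (holds pair_image_fml (a, tt) <->
     exists a1 a2, a = eval dflt pair_expr (a1, (a2, tt))) /\
  (holds pair_image_fml (a, tt) ->
     eval dflt pair_expr (eval dflt proj1_expr (a, tt), (eval dflt proj2_expr (a, tt), tt)) = a).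
Proof.
  rewrite holds_pair_image_fml; setoid_rewrite eval_pair_expr; split; [tauto|].
  intros (a1 & a2 & ->); destruct (eval_proj_exprs _ a1 a2 eq_refl) as [E1 E2].
  f_equal; f_equal; assumption.
Qed.

End Semantics.
End Encoding.

Arguments pair_expr {n1 n2 m} l1 l2.
Arguments proj1_expr {n1 m} l1.
Arguments proj2_expr {n2 m} l2.
Arguments pair_image_fml {n1 n2 m} l1 l2.

Theorem mainTheorem6 (n1 n2 : nat) :
  exists (Pair : expr [Un n1; Un n2] (Un (S (S (Nat.max n1 n2)))))
         (pi1 : expr [Un (S (S (Nat.max n1 n2)))] (Un n1))
         (pi2 : expr [Un (S (S (Nat.max n1 n2)))] (Un n2))
         (Im : fml [Un (S (S (Nat.max n1 n2)))]),
    no_get Pair /\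
    forall (U : Type) (dflt : forall T, sem U T),
      (forall (a1 : sem U (Un n1)) (a2 : sem U (Un n2)),
          eval dflt pi1 (eval dflt Pair (a1, (a2, tt)), tt) = a1 /\
          eval dflt pi2 (eval dflt Pair (a1, (a2, tt)), tt) = a2) /\
      (forall a : sem U (Un (S (S (Nat.max n1 n2)))),
          (holds Im (a, tt) <->
             exists (a1 : sem U (Un n1)) (a2 : sem U (Un n2)),
               a = eval dflt Pair (a1, (a2, tt))) /\
          (holds Im (a, tt) ->
             eval dflt Pair (eval dflt pi1 (a, tt), (eval dflt pi2 (a, tt), tt)) = a)).
Proof.
  destruct (lifting_of_le (Nat.le_max_l n1 n2)) as [l1].
  destruct (lifting_of_le (Nat.le_max_r n1 n2)) as [l2].
  exists (pair_expr l1 l2), (proj1_expr l1), (proj2_expr l2), (pair_image_fml l1 l2).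
  split; [apply no_get_pair_expr|].
  intros U dflt; split; [apply eval_proj_pair_expr | apply pair_image_fml_correct].
Qed.
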